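(* Let $n$ be an odd positive integer and $k$ an integer with $1<k<n$ and $\gcd(n,k)=\gcd(n,k-1)=1$. Then there is exactly one quasigroup operation on $\{1,2,\dots,n\}$ that is idempotent and $k$-translatable with respect to the ordering $1,2,\dots,n$.
   Context: A groupoid on $\{1,\dots,n\}$ is $k$-translatable with respect to the ordering $1,\dots,n$ if $i\cdot j=(i-1)\cdot(j-k)$ for all $i\in\{2,\dots,n\}$, $j\in\{1,\dots,n\}$, where $j-k$ is taken modulo $n$ in $\{1,\dots,n\}$. Idempotent means $x\cdot x=x$ for all $x$. *)

From mathcomp Require Import all_boot.
Set Implicit Arguments. Unset Strict Implicit. Unset Printing Implicit Defensive.

(* Elements 1..n of the paper are represented by the ordinals 0..n-1 of 'I_n
   (paper element x  <->  ordinal x-1); the ordering 1,...,n becomes 0,...,n-1.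
   A binary operation (groupoid) on the set is a finite function. *)
Definition binop (n : nat) := {ffun 'I_n * 'I_n -> 'I_n}.

Definition opp {n} (f : binop n) (x y : 'I_n) : 'I_n := f (x, y).

Definition is_quasigroup n (f : binop n) : Prop :=
  (forall a : 'I_n, bijective (fun x => opp f a x)) /\
  (forall a : 'I_n, bijective (fun x => opp f x a)).

Definition idempotent_binop n (f : binop n) : Prop := forall x : 'I_n, opp f x x = x.

(* j - k taken modulo n (0-based representatives in 'I_n).  For paper elements
   J = j+1, the paper's (J - k) mod n in {1..n} equals ((j - k) mod n) + 1. *)
Definition subk n (k : nat) (j : 'I_n) : 'I_n := insubd j ((j + n - k %% n) %% n).
(* insubd j v = the ordinal with value v whenever v < n (always the case here,
   since j : 'I_n forces 0 < n); the default j is never used. *)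

(* k-translatable w.r.t. the natural ordering: for paper rows i in {2..n},
   i.e. 0-based rows i with 1 <= i, row i is row i-1 shifted:
   i * j = (i-1) * (j - k). *)
Definition k_translatable n (k : nat) (f : binop n) : Prop :=
  forall (i j : 'I_n), 0 < val i ->
    opp f i j = opp f (insubd i i.-1) (subk k j).

(* Identify {1..n} with Z/nZ.  Translatability propagates row 0 down the table:
   x * y = 0 * (y - k x).  Idempotency then forces 0 * ((1 - k) x) = x, and
   since 1 - k is a unit (gcd(n, k - 1) = 1) row 0 is y |-> y / (1 - k).  So
   the only candidate is x * y = (y - k x) / (1 - k), which is a quasigroup
   because k and 1 - k are units. *)
From mathcomp Require Import all_boot all_algebra.
From mathcomp Require Import ring.
Import GRing.Theory.
Local Open Scope ring_scope.

Section TranslatableZp.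
Variable m : nat.
Local Notation n := m.+2.

Lemma insubd_predE (i : 'Z_n) : (0 < i)%N -> insubd i i.-1 = i - 1.
Proof.
move=> i0; apply/eqP; rewrite eq_sym subr_eq; apply/eqP/val_inj.
rewrite /= val_insubd (leq_ltn_trans (leq_pred i)) //.
by rewrite [(1 %% _)%N]modn_small // addn1 prednK // modn_small.
Qed.

Lemma val_subr1 (i : 'Z_n) : (0 < i)%N -> val (i - 1) = i.-1.
Proof.
by move=> i0; rewrite -insubd_predE // val_insubd (leq_ltn_trans (leq_pred i)).
Qed.

Lemma subkE k (j : 'Z_n) : subk k j = j - k%:R.
Proof.
apply: val_inj; rewrite /subk val_insubd ltn_pmod //= Zp_nat /= modnDmr.
by rewrite addnBA // ltnW // ltn_pmod.
Qed.

Lemma k_translatableE k (g : binop n) :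
  k_translatable k g <->
  forall i j : 'Z_n, (0 < i)%N -> opp g i j = opp g (i - 1) (j - k%:R).
Proof.
by split=> gk i j i0; rewrite gk // insubd_predE // subkE.
Qed.

Lemma k_translatable_row0 k (g : binop n) : k_translatable k g ->
  forall i j : 'Z_n, opp g i j = opp g 0 (j - i * k%:R).
Proof.
move=> /k_translatableE gk i; move def_t: (val i) => t.
elim: t i def_t => [|t IH] i def_i j.
  have -> : i = 0 by apply: val_inj.
  by rewrite mul0r subr0.
rewrite gk ?def_i // IH; last by rewrite val_subr1 def_i.
by congr opp; ring.
Qed.

Definition translatable_op k : binop n :=
  [ffun p : 'Z_n * 'Z_n => (p.2 - p.1 * k%:R) / (1 - k%:R)].

Lemma translatable_opE k (i j : 'Z_n) :
  opp (translatable_op k) i j = (j - i * k%:R) / (1 - k%:R).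
Proof. by rewrite /opp ffunE. Qed.

Variable k : nat.
Hypotheses (k_unit : (k%:R : 'Z_n) \is a GRing.unit)
           (k1_unit : (1 - k%:R : 'Z_n) \is a GRing.unit).

Lemma translatable_op_k_translatable : k_translatable k (translatable_op k).
Proof.
by apply/k_translatableE => i j _; rewrite !translatable_opE; congr (_ / _); ring.
Qed.

Lemma translatable_op_idempotent : idempotent_binop (translatable_op k).
Proof.
move=> x; rewrite translatable_opE.
have -> : x - x * k%:R = x * (1 - k%:R) by ring.
exact: mulrK.
Qed.

Lemma translatable_op_quasigroup : is_quasigroup (translatable_op k).
Proof.
have div_inj : injective (fun x : 'Z_n => x / (1 - k%:R)).
  by apply: mulIr; rewrite unitrV.
split=> a; apply: injF_bij => x y; rewrite !translatable_opE.
  by move/div_inj/addIr.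
by move/div_inj/addrI/oppr_inj/(mulIr k_unit).
Qed.

Lemma translatable_op_unique (g : binop n) :
  idempotent_binop g -> k_translatable k g -> g = translatable_op k.
Proof.
move=> g_id /k_translatable_row0 g_row0.
have row0 (y : 'Z_n) : opp g 0 y = y / (1 - k%:R).
  have := g_id (y / (1 - k%:R)); rewrite g_row0.
  have -> : y / (1 - k%:R) - y / (1 - k%:R) * k%:R = y / (1 - k%:R) * (1 - k%:R).
    by ring.
  by rewrite mulrVK.
by apply/ffunP => -[i j]; rewrite ffunE -[LHS]/(opp g i j) g_row0 row0.
Qed.

End TranslatableZp.

Local Close Scope ring_scope.

Theorem corollary8p10 (n k : nat) :
  odd n -> 1 < k < n -> coprime n k -> coprime n k.-1 ->
  exists f : binop n,
    (is_quasigroup f /\ idempotent_binop f /\ k_translatable k f) /\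
    (forall g : binop n,
        is_quasigroup g /\ idempotent_binop g /\ k_translatable k g -> g = f).
Proof.
case: n => [|[|m]] _ /andP[k_gt1 k_lt_n]; [by case: k k_gt1 k_lt_n..|].
move=> cop_k cop_k1.
have k_unit : (k%:R : 'Z_m.+2)%R \is a GRing.unit by rewrite unitZpE.
have k1_unit : (1 - k%:R : 'Z_m.+2)%R \is a GRing.unit.
  rewrite -[k in (k%:R)%R](ltn_predK k_gt1) -natr1 opprD addrCA subrr addr0 unitrN.
  by rewrite unitZpE.
exists (translatable_op m k); split.
  split; [exact: translatable_op_quasigroup | split].
  - exact: translatable_op_idempotent.
  - exact: translatable_op_k_translatable.
by move=> g [_ [g_id g_k]]; apply: translatable_op_unique g_id g_k.
Qed.
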